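(* Suppose the Lipschitz assumption holds. Then for every $t\in\mathbb N_T$ there exists a constant $K^5_t>0$ such that for all $m_t\in\mathcal M_n$ and $z_t\in\Delta(\mathcal X)$, $$|V_t(m_t)-\hat V_t(z_t)|\le K^5_t\|m_t-z_t\|_\infty+\mathcal O(1/\sqrt n).$$
   Context: Fix $n\in\mathbb N$ agents, $T\in\mathbb N$, finite sets $\mathcal X,\mathcal U,\mathcal W$; $\mathbb N_k=\{1,\dots,k\}$; $\mathcal I(\mathcal X)=[0,1]^{\mathcal X}$; $\Delta(\mathcal X)$ the probability vectors on $\mathcal X$; $\mathcal M_n=\{m\in\Delta(\mathcal X):m(x)\in\{0,\tfrac1n,\dots,1\}\}$. Agent $i\in\mathbb N_n$ has state $x^i_t\in\mathcal X$ and action $u^i_t\in\mathcal U$; mean-field $m_t(x)=\frac1n\sum_i\mathbb 1(x^i_t=x)$; dynamics $x^i_{t+1}=f_t(x^i_t,u^i_t,w^i_t,m_t)$ with $f_t:\mathcal X\times\mathcal U\times\mathcal W\times\mathcal I(\mathcal X)\to\mathcal X$; for each $t$ the noises $w^1_t,\dots,w^n_t$ are i.i.d. with law $\mathbb P(w_t=\cdot)$, independent of everything up to time $t$. $\mathbb P(y|x,u,z)=\sum_w\mathbb 1(f_t(x,u,w,z)=y)\mathbb P(w_t=w)$; costs $\ell_t:\mathcal X\times\mathcal U\times\mathcal I(\mathcal X)\to\mathbb R_{\ge0}$. Lipschitz assumption: constants $K^1_t,K^2_t>0$ with $|\mathbb P(y|x,u,z_1)-\mathbb P(y|x,u,z_2)|\le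 K^1_t\|z_1-z_2\|_\infty$, $|\ell_t(x,u,z_1)-\ell_t(x,u,z_2)|\le K^2_t\|z_1-z_2\|_\infty$ for all $x,y,u$, $z_1,z_2\in\mathcal I(\mathcal X)$. $\mathcal G$ is the set of maps $\gamma:\mathcal X\to\mathcal U$; $\hat f_t(z,\gamma)(y)=\sum_x z(x)\mathbb P(y|x,\gamma(x),z)$; $\hat c_t(z,\gamma)=\sum_x z(x)\ell_t(x,\gamma(x),z)$. Deterministic value functions $\hat V_t:\Delta(\mathcal X)\to\mathbb R$: $\hat V_{T+1}\equiv0$, $\hat V_t(z)=\min_{\gamma\in\mathcal G}\big(\hat c_t(z,\gamma)+\hat V_{t+1}(\hat f_t(z,\gamma))\big)$. Mean-field sharing value functions $V_t:\mathcal M_n\to\mathbb R$: $V_{T+1}\equiv0$, $V_t(m)=\min_{\gamma\in\mathcal G}\big(\hat c_t(m,\gamma)+\mathbb E[V_{t+1}(m_{t+1})\mid m_t=m,\gamma_t=\gamma]\big)$, where the conditional expectation is with respect to the law of the empirical distribution $m_{t+1}$ at time $t+1$ when the empirical distribution at time $t$ is $m$ and every agent uses $u^i_t=\gamma(x^i_t)$. Model data do not depend on $n$; $\mathcal O(1/\sqrt n)$ denotes a quantity bounded by $C/\sqrt n$ with $C$ independent of $n$, $m_t$, $z_t$. *)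

From mathcomp Require Import all_boot all_order all_algebra.
From mathcomp Require Import reals.
Set Implicit Arguments. Unset Strict Implicit. Unset Printing Implicit Defensive.
Import Order.TTheory GRing.Theory Num.Theory.
Local Open Scope ring_scope.

Section MF.
Variables (R : realType) (X U W : finType).

Definition supnorm (z : {ffun X -> R}) : R := \big[Num.max/0]_(x : X) `|z x|.

Definition inI (z : {ffun X -> R}) : Prop := forall x, 0 <= z x <= 1.
Definition inDelta (z : {ffun X -> R}) : Prop :=
  (forall x, 0 <= z x) /\ \sum_(x : X) z x = 1.
Definition inMn (n : nat) (m : {ffun X -> R}) : Prop :=
  inDelta m /\ forall x, exists k : nat, (k <= n)%N /\ m x = k%:R / n%:R.

(* minimum over the finite set G of maps X -> U (0 if G is empty) *)
Definition minG (F : {ffun X -> U} -> R) : R :=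
  match enum {ffun X -> U} with
  | [::] => 0
  | g :: s => foldr (fun g' acc => Num.min (F g') acc) (F g) s
  end.

Variables (f : nat -> X -> U -> W -> {ffun X -> R} -> X)
          (pw : nat -> W -> R)
          (l : nat -> X -> U -> {ffun X -> R} -> R).

Definition Ptr (t : nat) (x : X) (u : U) (z : {ffun X -> R}) (y : X) : R :=
  \sum_(w : W) (f t x u w z == y)%:R * pw t w.

Definition fhat (t : nat) (z : {ffun X -> R}) (g : {ffun X -> U}) : {ffun X -> R} :=
  [ffun y => \sum_(x : X) z x * Ptr t x (g x) z y].
Definition chat (t : nat) (z : {ffun X -> R}) (g : {ffun X -> U}) : R :=
  \sum_(x : X) z x * l t x (g x) z.

(* Vhat_rec s t : value function at time t with s = T+1-t stages remaining *)
Fixpoint Vhat_rec (s t : nat) (z : {ffun X -> R}) : R :=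
  match s with
  | O => 0
  | s'.+1 => minG (fun g => chat t z g + Vhat_rec s' t.+1 (fhat t z g))
  end.
Definition Vhat (T t : nat) (z : {ffun X -> R}) : R := Vhat_rec (T.+1 - t) t z.

Definition emp (n : nat) (x : {ffun 'I_n -> X}) : {ffun X -> R} :=
  [ffun y => #|[set i | x i == y]|%:R / n%:R].

(* Mean-field sharing value function: V_t(m) = min_g (chat t m g +
   E[V_{t+1}(m_{t+1}) | m_t = m, g]); the conditional expectation is computed
   from any configuration x with empirical distribution m (a canonical one is
   picked), each agent i moving to f t (x i) (g (x i)) (w i) m with
   i.i.d. noises w i of law pw t. *)
Fixpoint V_rec (n : nat) (s t : nat) (m : {ffun X -> R}) : R :=
  match s with
  | O => 0
  | s'.+1 =>
    match [pick x : {ffun 'I_n -> X} | emp x == m] with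
    | None => 0
    | Some x =>
      minG (fun g => chat t m g +
        \sum_(w : {ffun 'I_n -> W}) (\prod_(i < n) pw t (w i)) *
           V_rec n s' t.+1 (emp [ffun i => f t (x i) (g (x i)) (w i) m]))
    end
  end.
Definition V (n T t : nat) (m : {ffun X -> R}) : R := V_rec n (T.+1 - t) t m.

End MF.

(* The deterministic value function is
   Lipschitz on the simplex: the one-step cost and the mean-field flow are
   Lipschitz there, and a minimum over the finite set of decision rules of
   functions with a common Lipschitz constant has that constant too. On M_n,
   |V_t - Vhat_t| = O(1/sqrt n): given the current configuration, each
   coordinate of m_{t+1} is an average of n independent indicators whose mean
   is the corresponding coordinate of fhat_t(m_t, g), so a second-moment bound
   gives E ||m_{t+1} - fhat_t(m_t, g)||_oo <= |X| / sqrt n; the Lipschitz bound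
   for Vhat_{t+1} and the induction hypothesis then control the expected
   continuation value. The theorem follows from the triangle inequality
   through Vhat_t(m_t). *)

From mathcomp Require Import all_boot all_order all_algebra.
From mathcomp Require Import reals.
From mathcomp Require Import ring lra zify.
Set Implicit Arguments. Unset Strict Implicit. Unset Printing Implicit Defensive.
Import Order.TTheory GRing.Theory Num.Theory.
Local Open Scope ring_scope.

Section FiniteVectors.
Variables (R : realType) (X : finType).
Implicit Types z : {ffun X -> R}.

Lemma supnorm_ge0 z : 0 <= supnorm z.
Proof. by rewrite /supnorm; elim/big_ind: _ => //= a b ha hb; rewrite le_max ha. Qed.

Lemma norm_le_supnorm z x : `|z x| <= supnorm z.
Proof. exact: (le_bigmax 0 (fun x => `|z x|)). Qed.

Lemma supnorm_le z c : 0 <= c -> (forall x, `|z x| <= c) -> supnorm z <= c.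
Proof. by move=> c0 zc; apply/bigmax_leP; split => // x _; apply: zc. Qed.

Lemma supnorm_sub_le_sum z z' : supnorm (z - z') <= \sum_x `|z x - z' x|.
Proof.
apply: supnorm_le => [|x]; first exact: sumr_ge0.
by rewrite (bigD1 x) //= !ffunE lerDl sumr_ge0.
Qed.

Lemma sum_dist_le_card_supnorm z z' :
  \sum_x `|z x - z' x| <= #|X|%:R * supnorm (z - z').
Proof.
have -> : #|X|%:R * supnorm (z - z') = \sum_(x : X) supnorm (z - z').
  by rewrite sumr_const mulr_natl.
apply: ler_sum => x _.
by have := norm_le_supnorm (z - z') x; rewrite !ffunE.
Qed.

Lemma inDelta_inI z : inDelta z -> inI z.
Proof.
case=> z0 z1 x; rewrite z0 -z1 (bigD1 x) //= lerDl.
by apply: sumr_ge0 => y _; apply: z0.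
Qed.

End FiniteVectors.

Lemma dist_min_le (R : realDomainType) (a b c d e : R) :
  `|a - c| <= e -> `|b - d| <= e -> `|Num.min a b - Num.min c d| <= e.
Proof.
rewrite !ler_norml => /andP[ac ca] /andP[bd db].
by rewrite !minEle; case: (leP a b); case: (leP c d) => *; apply/andP; split; lra.
Qed.

Lemma dist_minG_le (R : realType) (X U : finType) (F G : {ffun X -> U} -> R) e :
  0 <= e -> (forall g, `|F g - G g| <= e) -> `|minG F - minG G| <= e.
Proof.
move=> e0 FG; rewrite /minG; case: (enum _) => [|g s]; first by rewrite subr0 normr0.
by elim: s => [|g' s IH] //=; apply: dist_min_le.
Qed.

Lemma dist_weighted_sum_le (R : realType) (X : finType) (z z' : {ffun X -> R})
    (A A' : X -> R) (a b : R) :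
  inDelta z' -> 0 <= a -> (forall x, `|A x| <= a) -> (forall x, `|A x - A' x| <= b) ->
  `|\sum_x z x * A x - \sum_x z' x * A' x| <= #|X|%:R * a * supnorm (z - z') + b.
Proof.
move=> [z'0 z'1] a0 Aa AA'.
rewrite -sumrB (eq_bigr (fun x => (z x - z' x) * A x + z' x * (A x - A' x)));
  last by move=> x _; ring.
apply: le_trans (ler_norm_sum _ _ _) _.
apply: (@le_trans _ _ (\sum_x (`|z x - z' x| * a + z' x * b))).
  apply: ler_sum => x _; apply: le_trans (ler_normD _ _) _.
  by rewrite !normrM [`|z' x|]ger0_norm // lerD // ler_wpM2l.
by rewrite big_split /= -!mulr_suml z'1 mul1r lerD2r mulrAC ler_wpM2r ?sum_dist_le_card_supnorm.
Qed.

Section Expectation.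
Variables (R : realType) (W : finType) (n : nat) (p : W -> R).
Hypotheses (p_ge0 : forall w, 0 <= p w) (p_sum1 : \sum_w p w = 1).
Implicit Types F G : {ffun 'I_n -> W} -> R.

Definition Ex F : R := \sum_(w : {ffun 'I_n -> W}) (\prod_(i < n) p (w i)) * F w.

Lemma eq_Ex F G : F =1 G -> Ex F = Ex G.
Proof. by move=> FG; apply: eq_bigr => w _; rewrite FG. Qed.

Lemma ExD F G : Ex (fun w => F w + G w) = Ex F + Ex G.
Proof. by rewrite /Ex -big_split; apply: eq_bigr => w _; rewrite mulrDr. Qed.

Lemma ExB F G : Ex (fun w => F w - G w) = Ex F - Ex G.
Proof. by rewrite /Ex -sumrB; apply: eq_bigr => w _; rewrite mulrBr. Qed.

Lemma ExZ c F : Ex (fun w => c * F w) = c * Ex F.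
Proof. by rewrite /Ex mulr_sumr; apply: eq_bigr => w _; rewrite mulrCA. Qed.

Lemma Ex_sum (I : finType) (F : I -> {ffun 'I_n -> W} -> R) :
  Ex (fun w => \sum_i F i w) = \sum_i Ex (F i).
Proof. by rewrite /Ex exchange_big; apply: eq_bigr => w _; rewrite mulr_sumr. Qed.

Lemma Ex_prod (phi : 'I_n -> W -> R) :
  Ex (fun w => \prod_i phi i (w i)) = \prod_i \sum_v p v * phi i v.
Proof. by rewrite /Ex bigA_distr_bigA; apply: eq_bigr => w _; rewrite big_split. Qed.

Lemma ExC c : Ex (fun _ => c) = c.
Proof.
rewrite (eq_Ex (G := fun w => c * \prod_(i < n) 1)); last by move=> w; rewrite big1 ?mulr1.
rewrite ExZ (Ex_prod (fun _ _ => 1)) big1 ?mulr1 // => i _.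
by under eq_bigr do rewrite mulr1.
Qed.

Lemma ler_Ex F G : (forall w, F w <= G w) -> Ex F <= Ex G.
Proof. by move=> FG; apply: ler_sum => w _; rewrite ler_wpM2l ?prodr_ge0. Qed.

Lemma norm_Ex_le F : `|Ex F| <= Ex (fun w => `|F w|).
Proof.
apply: le_trans (ler_norm_sum _ _ _) _; apply: ler_sum => w _.
by rewrite normrM ger0_norm ?prodr_ge0.
Qed.

Lemma Ex_mul_centered (D : 'I_n -> W -> R) i j : i != j ->
  \sum_v p v * D i v = 0 -> Ex (fun w => D i (w i) * D j (w j)) = 0.
Proof.
move=> ij Di0.
pose phi k v := (if k == i then D i v else 1) * (if k == j then D j v else 1).
rewrite (eq_Ex (G := fun w => \prod_k phi k (w k))); last first.
  by move=> w; rewrite big_split /= -!big_mkcond /= !big_pred1_eq.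
rewrite Ex_prod (bigD1 i) //= /phi eqxx (negbTE ij).
by under eq_bigr do rewrite mulr1; rewrite Di0 mul0r.
Qed.

Lemma Ex_sqr_sum_centered (D : 'I_n -> W -> R) :
  (forall i, \sum_v p v * D i v = 0) -> (forall i v, `|D i v| <= 1) ->
  Ex (fun w => (\sum_i D i (w i)) ^+ 2) <= n%:R.
Proof.
move=> D0 D1.
rewrite (eq_Ex (G := fun w => \sum_i \sum_j D i (w i) * D j (w j))); last first.
  by move=> w; rewrite expr2 mulr_suml; apply: eq_bigr => i _; rewrite mulr_sumr.
have -> : n%:R = \sum_(i < n) 1 :> R by rewrite sumr_const card_ord.
rewrite Ex_sum; apply: ler_sum => i _.
rewrite (Ex_sum (fun j w => D i (w i) * D j (w j))) (bigD1 i) //= big1 ?addr0;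
  last by move=> j ji; apply: Ex_mul_centered; rewrite // eq_sym.
rewrite -[1 in X in _ <= X](ExC 1); apply: ler_Ex => w.
by have := D1 i (w i); rewrite ler_norml => /andP[? ?]; nra.
Qed.

Lemma Ex_norm_le_of_Ex_sqr F c : 0 < c -> Ex (fun w => F w ^+ 2) <= c ^+ 2 ->
  Ex (fun w => `|F w|) <= c.
Proof.
move=> c0 F2c.
(* Integrate AM-GM: 2 c |F| <= F^2 + c^2. *)
have : Ex (fun w => 2 * c * `|F w|) <= Ex (fun w => F w ^+ 2 + c ^+ 2).
  apply: ler_Ex => w; rewrite -[F w ^+ 2]real_normK ?num_real //.
  by have := sqr_ge0 (`|F w| - c); nra.
by rewrite ExZ ExD ExC; nra.
Qed.

Lemma Ex_sample_mean_dev (Z : 'I_n -> W -> R) : (0 < n)%N ->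
  (forall i v, 0 <= Z i v <= 1) ->
  Ex (fun w => `|(\sum_i Z i (w i)) / n%:R - (\sum_i \sum_v Z i v * p v) / n%:R|)
    <= (Num.sqrt n%:R)^-1.
Proof.
move=> n_gt0 Z01.
pose c i := \sum_v Z i v * p v.
pose D i v := Z i v - c i.
have c01 i : 0 <= c i <= 1.
  rewrite sumr_ge0 => [|v _] /=; last by rewrite mulr_ge0 ?p_ge0 //; case/andP: (Z01 i v).
  rewrite -p_sum1 ler_sum // => v _; rewrite ler_piMl //; by case/andP: (Z01 i v).
have D0 i : \sum_v p v * D i v = 0.
  rewrite /D; under eq_bigr do rewrite mulrBr.
  rewrite sumrB -mulr_suml p_sum1 mul1r; apply/eqP; rewrite subr_eq0; apply/eqP.
  by apply: eq_bigr => v _; rewrite mulrC.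
have D1 i v : `|D i v| <= 1.
  rewrite ler_norml /D; have := c01 i; have := Z01 i v => /andP[? ?] /andP[? ?].
  by apply/andP; split; lra.
have sqrt_gt0 : 0 < Num.sqrt (n%:R : R) by rewrite sqrtr_gt0 ltr0n.
have sqrtK : Num.sqrt (n%:R : R) ^+ 2 = n%:R by rewrite sqr_sqrtr ?ler0n.
rewrite (eq_Ex (G := fun w => n%:R^-1 * `|\sum_i D i (w i)|)); last first.
  move=> w; rewrite -mulrBl normrM [`|_^-1|]ger0_norm ?invr_ge0 ?ler0n //.
  by rewrite mulrC /D sumrB.
have ES : Ex (fun w => `|\sum_i D i (w i)|) <= Num.sqrt n%:R.
  by apply: Ex_norm_le_of_Ex_sqr; rewrite // sqrtK; apply: Ex_sqr_sum_centered.
have n_inv_ge0 : 0 <= n%:R^-1 :> R by rewrite invr_ge0 ler0n.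
rewrite ExZ; apply: le_trans (ler_wpM2l n_inv_ge0 ES) _.
by rewrite -[X in X^-1 * _]sqrtK expr2 invfM mulfVK ?gt_eqF.
Qed.

End Expectation.

Section Empirical.
Variables (R : realType) (X : finType) (n : nat).
Implicit Types x : {ffun 'I_n -> X}.

Lemma sum_cond_const x y (c : R) :
  \sum_(i | x i == y) c = #|[set i | x i == y]|%:R * c.
Proof.
rewrite (eq_bigl (mem [set i | x i == y])) => [|i]; last by rewrite !inE.
by rewrite sumr_const mulr_natl.
Qed.

Lemma sum_fiber x (F : X -> R) :
  \sum_i F (x i) = \sum_y #|[set i | x i == y]|%:R * F y.
Proof.
rewrite (partition_big x predT) //; apply: eq_bigr => y _.
by rewrite -sum_cond_const; apply: eq_bigr => i /eqP ->.
Qed.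

Lemma sum_indicator x y : \sum_i ((x i == y)%:R : R) = #|[set i | x i == y]|%:R.
Proof.
rewrite (eq_bigr (fun i => if x i == y then 1 else 0)) => [|i _]; last by case: eqP.
by rewrite -big_mkcond sum_cond_const mulr1.
Qed.

Lemma emp_inMn x : (0 < n)%N -> inMn n (emp R x).
Proof.
move=> n_gt0; split; first split.
- by move=> y; rewrite ffunE divr_ge0.
- under eq_bigr do rewrite ffunE.
  rewrite -mulr_suml (eq_bigr (fun y => #|[set i | x i == y]|%:R * 1)) => [|y _];
    last by rewrite mulr1.
  by rewrite -sum_fiber sumr_const card_ord divff // pnatr_eq0 -lt0n.
- move=> y; exists #|[set i | x i == y]|; rewrite ffunE; split => //.
  by rewrite -[n in (_ <= n)%N]card_ord max_card.
Qed.

Lemma count_flatten_nseq (k : X -> nat) y :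
  count_mem y (flatten [seq nseq (k y') y' | y' <- enum X]) = k y.
Proof.
rewrite count_flatten -map_comp.
rewrite (eq_map (g := fun y' => ((y' == y) * k y')%N)) => [|y' /=]; last first.
  by rewrite count_nseq mulnC.
rewrite sumnE big_map big_enum (bigD1 y) //= eqxx mul1n big1 ?addn0 // => y'.
by move/negbTE ->.
Qed.

Lemma inMn_emp m : (0 < n)%N -> inMn n m -> exists x, emp R x = m.
Proof.
move=> n_gt0 [[m_ge0 m_sum1] m_grid].
have n_neq0 : (n%:R : R) != 0 by rewrite pnatr_eq0 -lt0n.
have [k mk] : exists k : X -> nat, forall y, m y = (k y)%:R / n%:R.
  by have [k hk] := fin_all_exists m_grid; exists k => y; case: (hk y).
have sum_k : (\sum_y k y)%N = n.
  apply/eqP; rewrite -(eqr_nat R) natr_sum -(divfK n_neq0 (\sum_y (k y)%:R)).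
  by rewrite mulr_suml; under eq_bigr => y _ do rewrite -mk; rewrite m_sum1 mul1r.
case: (pickP (fun _ : X => true)) => [y0 _ | X0]; last first.
  by move: m_sum1; rewrite big_pred0 // => /eqP; rewrite eq_sym oner_eq0.
pose s := flatten [seq nseq (k y) y | y <- enum X].
have size_s : size s = n.
  rewrite size_flatten /shape -map_comp (eq_map (g := k)) => [|y /=]; last by rewrite size_nseq.
  by rewrite -sum_k sumnE big_map big_enum.
exists [ffun i : 'I_n => nth y0 s i]; apply/ffunP => y.
rewrite !ffunE mk -(count_flatten_nseq k y) -sum1_count (big_nth y0) size_s big_mkord.
by rewrite -sum1_card; congr (_%:R / _); apply: eq_bigl => i; rewrite inE ffunE.
Qed.

End Empirical.

Section OneStep.
Variables (R : realType) (X U W : finType)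
  (f : nat -> X -> U -> W -> {ffun X -> R} -> X) (pw : nat -> W -> R)
  (l : nat -> X -> U -> {ffun X -> R} -> R) (t : nat) (K1 K2 : R).
Hypotheses (pw_ge0 : forall w, 0 <= pw t w) (pw_sum1 : \sum_w pw t w = 1).
Hypotheses (K1_ge0 : 0 <= K1) (K2_ge0 : 0 <= K2).
Hypothesis Ptr_lip : forall x y u (z1 z2 : {ffun X -> R}), inI z1 -> inI z2 ->
  `|Ptr f pw t x u z1 y - Ptr f pw t x u z2 y| <= K1 * supnorm (z1 - z2).
Hypothesis l_lip : forall x u (z1 z2 : {ffun X -> R}), inI z1 -> inI z2 ->
  `|l t x u z1 - l t x u z2| <= K2 * supnorm (z1 - z2).
Implicit Types (g : {ffun X -> U}) (z : {ffun X -> R}).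

Lemma Ptr_ge0 x u z y : 0 <= Ptr f pw t x u z y.
Proof. by apply: sumr_ge0 => w _; rewrite mulr_ge0. Qed.

Lemma sum_Ptr x u z : \sum_y Ptr f pw t x u z y = 1.
Proof.
rewrite exchange_big -[RHS]pw_sum1; apply: eq_bigr => w _.
rewrite (bigD1 (f t x u w z)) //= eqxx mul1r big1 ?addr0 // => y.
by rewrite eq_sym => /negbTE ->; rewrite mul0r.
Qed.

Lemma Ptr_le1 x u z y : Ptr f pw t x u z y <= 1.
Proof.
rewrite -(sum_Ptr x u z) (bigD1 y) //= lerDl.
by apply: sumr_ge0 => y' _; apply: Ptr_ge0.
Qed.

Lemma fhat_inDelta z g : inDelta z -> inDelta (fhat f pw t z g).
Proof.
move=> [z_ge0 z_sum1]; split => [y|].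
  by rewrite ffunE; apply: sumr_ge0 => x _; rewrite mulr_ge0 ?Ptr_ge0.
under eq_bigr do rewrite ffunE.
rewrite exchange_big -[RHS]z_sum1; apply: eq_bigr => x _.
by rewrite -mulr_sumr sum_Ptr mulr1.
Qed.

Lemma supnorm_fhat_lip z z' g : inDelta z -> inDelta z' ->
  supnorm (fhat f pw t z g - fhat f pw t z' g) <= (#|X|%:R + K1) * supnorm (z - z').
Proof.
move=> z_Delta z'_Delta.
apply: supnorm_le => [|y]; first by rewrite mulr_ge0 ?addr_ge0 ?supnorm_ge0.
rewrite !ffunE mulrDl -[#|X|%:R]mulr1.
apply: dist_weighted_sum_le => // x; first by rewrite ger0_norm ?Ptr_le1 ?Ptr_ge0.
by apply: Ptr_lip; apply: inDelta_inI.
Qed.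

(* Lipschitz continuity bounds l on the simplex by its values at z = 0. *)
Lemma l_bounded : exists B : R, 0 <= B /\
  forall x u z, inDelta z -> `|l t x u z| <= B.
Proof.
pose z0 : {ffun X -> R} := [ffun _ => 0].
have z0_inI : inI z0 by move=> x; rewrite ffunE lexx ler01.
exists (\sum_x \sum_u `|l t x u z0| + K2); split.
  by rewrite addr_ge0 //; do 2 (apply: sumr_ge0 => ? _).
move=> x u z z_Delta.
have l0_le : `|l t x u z0| <= \sum_x \sum_u `|l t x u z0|.
  rewrite (bigD1 x) //= (bigD1 u) //= -addrA lerDl addr_ge0 //.
    exact: sumr_ge0.
  by do 2 (apply: sumr_ge0 => ? _).
have dl_le : `|l t x u z - l t x u z0| <= K2.
  apply: le_trans (l_lip _ _ (inDelta_inI z_Delta) z0_inI) _.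
  rewrite ler_piMr // supnorm_le // => y; rewrite !ffunE subr0.
  by case/andP: (inDelta_inI z_Delta y) => y0 y1; rewrite ger0_norm.
rewrite -[l t x u z](subrK (l t x u z0)) addrC.
by apply: le_trans (ler_normD _ _) _; apply: lerD.
Qed.

Lemma chat_lip : exists a : R, 0 <= a /\ forall z z' g, inDelta z -> inDelta z' ->
  `|chat l t z g - chat l t z' g| <= a * supnorm (z - z').
Proof.
have [B [B_ge0 lB]] := l_bounded.
exists (#|X|%:R * B + K2); split; first by rewrite addr_ge0 ?mulr_ge0.
move=> z z' g z_Delta z'_Delta; rewrite mulrDl.
apply: dist_weighted_sum_le => // x; first exact: lB.
by apply: l_lip; apply: inDelta_inI.
Qed.

Lemma Ex_supnorm_emp_fhat n (x : {ffun 'I_n -> X}) g : (0 < n)%N ->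
  Ex (pw t) (fun w => supnorm
      (emp R [ffun i => f t (x i) (g (x i)) (w i) (emp R x)] - fhat f pw t (emp R x) g))
    <= #|X|%:R / Num.sqrt n%:R.
Proof.
move=> n_gt0.
set m := emp R x.
pose Z y i v : R := (f t (x i) (g (x i)) v m == y)%:R.
have emp_mean w y : emp R [ffun i => f t (x i) (g (x i)) (w i) m] y
    = (\sum_i Z y i (w i)) / n%:R.
  by rewrite ffunE -sum_indicator; congr (_ / _); apply: eq_bigr => i _; rewrite ffunE.
have fhat_mean y : fhat f pw t m g y = (\sum_i \sum_v Z y i v * pw t v) / n%:R.
  rewrite ffunE (sum_fiber x (fun x' => Ptr f pw t x' (g x') m y)) mulr_suml.
  by apply: eq_bigr => x' _; rewrite ffunE mulrAC.
apply: (@le_trans _ _ (\sum_y Ex (pw t) (fun w =>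
    `|(\sum_i Z y i (w i)) / n%:R - (\sum_i \sum_v Z y i v * pw t v) / n%:R|))).
  rewrite -Ex_sum; apply: ler_Ex => // w; apply: le_trans (supnorm_sub_le_sum _ _) _.
  by under eq_bigr do rewrite emp_mean fhat_mean.
have -> : #|X|%:R / Num.sqrt n%:R = \sum_(y : X) (Num.sqrt (n%:R : R))^-1.
  by rewrite sumr_const mulr_natl.
apply: ler_sum => y _; apply: Ex_sample_mean_dev => // i v.
by rewrite /Z; case: (_ == _); rewrite ?lexx ?ler01.
Qed.

Lemma V_rec_succ n s m : (0 < n)%N -> inMn n m ->
  exists2 x : {ffun 'I_n -> X}, emp R x = m &
    V_rec f pw l n s.+1 t m = minG (fun g => chat l t m g +
      Ex (pw t) (fun w => V_rec f pw l n s t.+1 (emp R [ffun i => f t (x i) (g (x i)) (w i) m]))).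
Proof.
move=> n_gt0 m_Mn /=; case: pickP => [x /eqP emp_x | no_x]; first by exists x.
by have [x emp_x] := inMn_emp n_gt0 m_Mn; move: (no_x x); rewrite emp_x eqxx.
Qed.

End OneStep.

Section BackwardInduction.
Variables (R : realType) (X U W : finType)
  (f : nat -> X -> U -> W -> {ffun X -> R} -> X) (pw : nat -> W -> R)
  (l : nat -> X -> U -> {ffun X -> R} -> R) (K1 K2 : nat -> R) (T : nat).
Hypothesis pw_prob : forall t, (1 <= t <= T)%N ->
  (forall w, 0 <= pw t w) /\ \sum_w pw t w = 1.
Hypothesis lip : forall t, (1 <= t <= T)%N ->
  0 < K1 t /\ 0 < K2 t /\
  forall (x y : X) (u : U) (z1 z2 : {ffun X -> R}), inI z1 -> inI z2 ->
    `|Ptr f pw t x u z1 y - Ptr f pw t x u z2 y| <= K1 t * supnorm (z1 - z2) /\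
    `|l t x u z1 - l t x u z2| <= K2 t * supnorm (z1 - z2).

Lemma Vhat_rec_lip s t : (1 <= t)%N -> (t + s = T.+1)%N -> exists L : R, 0 <= L /\
  forall z z', inDelta z -> inDelta z' ->
  `|Vhat_rec f pw l s t z - Vhat_rec f pw l s t z'| <= L * supnorm (z - z').
Proof.
elim: s t => [|s IH] t t_ge1 ts.
  by exists 0; split => // z z' _ _; rewrite subrr normr0 mul0r.
have t_le : (1 <= t <= T)%N by apply/andP; split; lia.
have [L [L_ge0 VL]] := IH t.+1 isT (etrans (addSnnS t s) ts).
have [p_ge0 p_sum1] := pw_prob t_le.
have [K1_gt0 [K2_gt0 lip_t]] := lip t_le.
have [a [a_ge0 chat_a]] :=
  chat_lip (ltW K2_gt0) (fun x u z1 z2 z1I z2I => proj2 (lip_t x x u z1 z2 z1I z2I)).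
have K1_ge0 := ltW K1_gt0.
have fhat_lip := supnorm_fhat_lip p_ge0 p_sum1 K1_ge0
  (fun x y u z1 z2 z1I z2I => proj1 (lip_t x y u z1 z2 z1I z2I)).
exists (a + L * (#|X|%:R + K1 t)); split; first by rewrite addr_ge0 ?mulr_ge0 ?addr_ge0.
move=> z z' z_Delta z'_Delta /=; apply: dist_minG_le => [|g].
  by rewrite mulr_ge0 ?supnorm_ge0 ?addr_ge0 ?mulr_ge0 ?addr_ge0.
rewrite opprD addrACA mulrDl; apply: le_trans (ler_normD _ _) _.
apply: lerD; first exact: chat_a.
apply: le_trans (VL _ _ (fhat_inDelta f p_ge0 p_sum1 g z_Delta)
  (fhat_inDelta f p_ge0 p_sum1 g z'_Delta)) _.
by rewrite -mulrA ler_wpM2l ?fhat_lip.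
Qed.

Lemma V_rec_close s t : (1 <= t)%N -> (t + s = T.+1)%N -> exists C : R, 0 <= C /\
  forall n, (0 < n)%N -> forall m, inMn n m ->
  `|V_rec f pw l n s t m - Vhat_rec f pw l s t m| <= C / Num.sqrt n%:R.
Proof.
elim: s t => [|s IH] t t_ge1 ts.
  by exists 0; split => // n _ m _; rewrite subrr normr0 mul0r.
have t_le : (1 <= t <= T)%N by apply/andP; split; lia.
have ts' := etrans (addSnnS t s) ts.
have [C [C_ge0 VC]] := IH t.+1 isT ts'.
have [L [L_ge0 VhL]] := Vhat_rec_lip (t := t.+1) isT ts'.
have [p_ge0 p_sum1] := pw_prob t_le.
exists (C + L * #|X|%:R); split; first by rewrite addr_ge0 ?mulr_ge0.
move=> n n_gt0 m m_Mn; have [x emp_x ->] := V_rec_succ f pw l t s n_gt0 m_Mn; subst m.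
apply: dist_minG_le => [|g]; first by rewrite divr_ge0 ?sqrtr_ge0 ?addr_ge0 ?mulr_ge0.
rewrite /= opprD addrACA subrr add0r.
rewrite -[X in _ - X](ExC n p_sum1) -ExB; apply: le_trans (norm_Ex_le p_ge0 _) _.
set next := fun w : {ffun 'I_n -> W} => emp R [ffun i => f t (x i) (g (x i)) (w i) (emp R x)].
set mhat := fhat f pw t (emp R x) g.
have next_Mn w : inMn n (next w) by apply: emp_inMn.
have mhat_Delta : inDelta mhat by apply: fhat_inDelta (proj1 m_Mn).
apply: (@le_trans _ _ (Ex (pw t) (fun w =>
    `|V_rec f pw l n s t.+1 (next w) - Vhat_rec f pw l s t.+1 (next w)|
    + L * supnorm (next w - mhat)))).
  apply: ler_Ex => // w; apply: le_trans (ler_distD (Vhat_rec f pw l s t.+1 (next w)) _ _) _.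
  by rewrite lerD // VhL //; case: (next_Mn w).
rewrite ExD ExZ mulrDl -mulrA lerD ?ler_wpM2l ?Ex_supnorm_emp_fhat //.
rewrite -[X in _ <= X](ExC n p_sum1); apply: ler_Ex => // w.
exact: VC.
Qed.

End BackwardInduction.

Theorem lemma6 (R : realType) (T : nat) (X U W : finType)
  (f : nat -> X -> U -> W -> {ffun X -> R} -> X)
  (pw : nat -> W -> R)
  (l : nat -> X -> U -> {ffun X -> R} -> R)
  (K1 K2 : nat -> R) :
  (* noise laws are probability vectors *)
  (forall t, (1 <= t <= T)%N -> (forall w, 0 <= pw t w) /\ \sum_(w : W) pw t w = 1) ->
  (* costs are nonnegative *)
  (forall t x u z, (1 <= t <= T)%N -> 0 <= l t x u z) ->
  (* Lipschitz assumption *)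
  (forall t, (1 <= t <= T)%N ->
     0 < K1 t /\ 0 < K2 t /\
     forall (x y : X) (u : U) (z1 z2 : {ffun X -> R}), inI z1 -> inI z2 ->
       `|Ptr f pw t x u z1 y - Ptr f pw t x u z2 y| <= K1 t * supnorm (z1 - z2) /\
       `|l t x u z1 - l t x u z2| <= K2 t * supnorm (z1 - z2)) ->
  forall t, (1 <= t <= T)%N ->
  exists K5 : R, 0 < K5 /\ exists C : R,
    forall (n : nat), (0 < n)%N ->
    forall (m z : {ffun X -> R}), inMn n m -> inDelta z ->
      `|V f pw l n T t m - Vhat f pw l T t z|
        <= K5 * supnorm (m - z) + C / Num.sqrt (n%:R).
Proof.
move=> pw_prob _ lip t /andP[t_ge1 t_le].
have ts : (t + (T.+1 - t) = T.+1)%N by lia.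
have [L [L_ge0 VhL]] := Vhat_rec_lip pw_prob lip t_ge1 ts.
have [C [_ VC]] := V_rec_close pw_prob lip t_ge1 ts.
exists (L + 1); split; first by lra.
exists C => n n_gt0 m z m_Mn z_Delta; rewrite /V /Vhat.
apply: le_trans (ler_distD (Vhat_rec f pw l (T.+1 - t) t m) _ _) _.
rewrite addrC lerD ?VC // (le_trans (VhL _ _ (proj1 m_Mn) z_Delta)) //.
by rewrite ler_wpM2r ?supnorm_ge0 ?lerDl.
Qed.
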